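(* The point $p=(v_{0,0},v_{1,0},v_{2,0},\ldots)$ is a fixed point of $T$, and it is the only periodic point of $(X,T)$.
   Context: Paths and cycles: a graph is $G=(V,E)$ with $V$ finite and $E\subset V\times V$. A path is a finite sequence of vertices $(u_0,\dots,u_L)$ with $(u_j,u_{j+1})\in E$; its length is $|\cdot|=L$; a cycle is a path with $u_0=u_L$. For paths where one ends where the next starts, $+$ denotes concatenation and $a\,c$ means the cycle $c$ traversed $a$ times. Construction: $G_0=(V_0,E_0)$ with $V_0=\{v_{0,0}\}$, $E_0=\{e_{0,0}\}$, $e_{0,0}=(v_{0,0},v_{0,0})$. For $n\geq1$, $G_n=(V_n,E_n)$ consists of a vertex $v_{n,0}$, the loop $e_{n,0}=(v_{n,0},v_{n,0})$, and $n$ cycles $c_{n,1},\dots,c_{n,n}$, each starting and ending at $v_{n,0}$, whose vertices other than $v_{n,0}$ are pairwise distinct (within each cycle and across cycles); $V_n$ is the set of all these vertices and $E_n$ consists of $e_{n,0}$ and the edges of the cycles. The maps $\varphi_n\colon V_{n+1}\to V_n$ and the lengths of the cycles $c_{n+1,i}$ are defined together: $\varphi_n(v_{n+1,0})=v_{n,0}$, and for each $i$ a path $P_{n,i}$ in $G_n$ from $v_{n,0}$ to $v_{n,0}$ is given; $c_{n+1,i}$ has length $|P_{n,i}|$ and $\varphi_n$ maps its $j$-th vertex to the $j$-th vertex of $P_{n,i}$ (written $\varphi_n(c_{n+1,i})=P_{n,i}$). The paths are: $P_{0,1}=10\,e_{0,0}$; for $n\geq1$: $P_{n,i}=e_{n,0}+2c_{n,i}+2c_{n,i+1}+\dots+2c_{n,n}+e_{n,0}$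 for $2\leq i\leq n$; $P_{n,n+1}=(n+2)^2\big(\sum_{i=1}^n|c_{n,i}|\big)\,e_{n,0}$; and $P_{n,1}=(1\,e_{n,0}+2c_{n,1})+(2\,e_{n,0}+2c_{n,1})+\dots+(k_n\,e_{n,0}+2c_{n,1})+e_{n,0}+2c_{n,2}+\dots+2c_{n,n}+e_{n,0}$, where $k_n=2\big(1+\sum_{i=1}^n|c_{n,i}|\big)$. Let $X=\{x\in\prod_{n\geq0}V_n:\varphi_n(x_{n+1})=x_n\ \forall n\}$ with metric $d(x,y)=2^{-\min\{i:x_i\neq y_i\}}$ ($d(x,x)=0$); $X$ is a compact zero-dimensional metric space, and $T\colon X\to X$ defined by $T(x)=y$ iff $(x_n,y_n)\in E_n$ for all $n$ is a well-defined homeomorphism. Write $x_n$ for the $n$-th coordinate of $x$. *)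

From mathcomp Require Import all_boot.
Set Implicit Arguments. Unset Strict Implicit. Unset Printing Implicit Defensive.

(* Vertices of G_n are encoded as pairs of naturals:
   (0,0)  = v_{n,0};
   (i,j)  = j-th vertex of the cycle c_{n,i}, for 1 <= i <= n, 1 <= j < |c_{n,i}|.
   A path (u_0,...,u_L) is encoded as the vertex list [:: u_0; ...; u_L];
   its length is size - 1. *)
Definition vtx := (nat * nat)%type.
Definition base : vtx := (0, 0).

(* concatenation of paths p + q (q starts where p ends) *)
Definition pcat (p q : seq vtx) : seq vtx := p ++ behead q.
Fixpoint rep (a : nat) (c : seq vtx) : seq vtx :=
  if a is a'.+1 then pcat c (rep a' c) else [:: base].
Definition loop : seq vtx := [:: base; base].
(* the cycle c_{n,i}, given the list ls of cycle lengths [|c_{n,1}|;...;|c_{n,n}|] *)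
Definition cyc (ls : seq nat) (i : nat) : seq vtx :=
  base :: [seq (i, j) | j <- iota 1 (nth 0 ls i.-1).-1] ++ [:: base].
Definition cycsum (ls : seq nat) (i n : nat) : seq vtx :=
  foldr (fun k p => pcat (rep 2 (cyc ls k)) p) [:: base] (iota i (n.+1 - i)).

Definition Ppath (n : nat) (ls : seq nat) (i : nat) : seq vtx :=
  if n == 0 then rep 10 loop
  else if i == 1 then
    let kn := 2 * (1 + sumn ls) in
    pcat (foldr (fun a p => pcat (pcat (rep a loop) (rep 2 (cyc ls 1))) p)
                [:: base] (iota 1 kn))
         (pcat loop (pcat (cycsum ls 2 n) loop))
  else if i <= n then pcat loop (pcat (cycsum ls i n) loop)
  else rep ((n + 2) ^ 2 * sumn ls) loop.

(* lens n = [:: |c_{n,1}|; ...; |c_{n,n}|] *)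
Fixpoint lens (n : nat) : seq nat :=
  if n is m.+1 then [seq (size (Ppath m (lens m) i)).-1 | i <- iota 1 m.+1]
  else [::].

Definition inV (n : nat) (v : vtx) : bool :=
  (v == base) || [&& 1 <= v.1 <= n & 1 <= v.2 < nth 0 (lens n) v.1.-1].

Definition inE (n : nat) (u w : vtx) : Prop :=
  (u = base /\ w = base) \/
  exists i j, [/\ 1 <= i <= n, j < nth 0 (lens n) i.-1,
                  u = nth base (cyc (lens n) i) j &
                  w = nth base (cyc (lens n) i) j.+1].

Definition phi (n : nat) (v : vtx) : vtx :=
  if v == base then base else nth base (Ppath n (lens n) v.1) v.2.

Definition inX (x : nat -> vtx) : Prop :=
  forall n, inV n (x n) /\ phi n (x n.+1) = x n.

(* the graph of T : T x = y iff (x_n, y_n) in E_n for all n *)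
Definition Trel (x y : nat -> vtx) : Prop := forall n, inE n (x n) (y n).

Definition periodic (x : nat -> vtx) : Prop :=
  inX x /\ exists k, 0 < k /\ exists s : nat -> nat -> vtx,
    [/\ s 0 = x, s k = x &
        forall m, m < k -> inX (s m) /\ Trel (s m) (s m.+1)].

Definition pt : nat -> vtx := fun _ => base.

(* If x is not the fixed point p, some coordinate x_n0 is not v_{n0,0}, and since
   phi_n maps v_{n+1,0} to v_{n,0} neither is any higher coordinate.  For n large,
   x_n sits on a cycle c_{n,i} of length at least n, and T moves it one step along
   that cycle; to come back to x_n it must go round the whole cycle, so its period
   is at least n.  Taking n beyond the period gives a contradiction. *)
From Pilot Require Import Defs.
From mathcomp Require Import all_boot.
From mathcomp Require Import zify.
From Stdlib Require Import FunctionalExtensionality.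

Definition plen (p : seq vtx) : nat := (size p).-1.

Lemma pcat_neq0 p q : p != [::] -> pcat p q != [::].
Proof. by case: p. Qed.

Lemma rep_neq0 a c : c != [::] -> rep a c != [::].
Proof. by case: a => //= a; apply: pcat_neq0. Qed.

Lemma foldr_neq0 (T : Type) (f : T -> seq vtx -> seq vtx) s :
  (forall a p, f a p != [::]) -> foldr f [:: base] s != [::].
Proof. by move=> f_neq0; case: s => //= a s; apply: f_neq0. Qed.

Lemma cycsum_neq0 ls i n : cycsum ls i n != [::].
Proof. by apply: foldr_neq0 => ? ?; apply/pcat_neq0/rep_neq0. Qed.

Lemma plen_pcat p q : p != [::] -> q != [::] -> plen (pcat p q) = plen p + plen q.
Proof. by case: p => // x p _; case: q => // y q _; rewrite /plen /pcat /= size_cat. Qed.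

Lemma plen_rep a c : c != [::] -> plen (rep a c) = a * plen c.
Proof.
move=> c_neq0; elim: a => [|a IH] /=; first by rewrite mul0n.
by rewrite plen_pcat ?rep_neq0 // IH mulSn.
Qed.

Lemma plen_cyc ls i : plen (cyc ls i) = (nth 0 ls i.-1).-1.+1.
Proof. by rewrite /plen /cyc /= size_cat size_map size_iota addn1. Qed.

Lemma plen_cycsum_ge ls i n : i <= n -> 2 * plen (cyc ls i) <= plen (cycsum ls i n).
Proof.
move=> le_in; rewrite /cycsum (_ : n.+1 - i = (n - i).+1); last by lia.
cbn [iota foldr]; rewrite plen_pcat ?rep_neq0 //; last exact: cycsum_neq0.
by rewrite plen_rep //; lia.
Qed.

Lemma Ppath_plen_ge n i : 0 < i ->
    (forall j, 0 < j <= n -> n <= nth 0 (lens n) j.-1) ->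
  n.+1 <= plen (Ppath n (lens n) i).
Proof.
move=> i_gt0 lens_ge.
rewrite /Ppath; case: eqP => [->|/eqP n_neq0]; first by rewrite plen_rep.
have lens1_ge : n <= nth 0 (lens n) 0 by apply: (lens_ge 1); lia.
have loop_neq0 : loop != [::] by [].
have blocks_neq0 s : foldr (fun a p => pcat (pcat (rep a loop) (rep 2 (cyc (lens n) 1))) p)
                       [:: base] s != [::].
  by apply: foldr_neq0 => ? ?; apply/pcat_neq0/pcat_neq0/rep_neq0.
case: eqP => [_|/eqP i_neq1].
  rewrite plen_pcat ?pcat_neq0 //; set kn := 2 * _.
  rewrite (_ : kn = kn.-1.+1); last by rewrite /kn; lia.
  cbn [iota foldr].
  rewrite plen_pcat ?pcat_neq0 ?rep_neq0 // plen_pcat ?rep_neq0 //.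
  by rewrite [plen (rep 2 _)]plen_rep // plen_cyc /=; lia.
case: ifP => le_in.
  rewrite plen_pcat ?pcat_neq0 ?cycsum_neq0 // plen_pcat ?cycsum_neq0 //.
  by have := @plen_cycsum_ge (lens n) i n le_in; rewrite plen_cyc; have := lens_ge i; lia.
rewrite plen_rep // /plen /=.
suff : nth 0 (lens n) 0 <= sumn (lens n) by nia.
by case: (lens n) => //= a s; lia.
Qed.

Lemma lens_ge n i : 0 < i <= n -> n <= nth 0 (lens n) i.-1.
Proof.
elim: n i => [|n IH] i /andP[i_gt0 le_in]; first lia.
rewrite (_ : lens n.+1 = [seq (size (Ppath n (lens n) k)).-1 | k <- iota 1 n.+1]) //.
rewrite (nth_map 0) ?size_iota; last lia.
rewrite nth_iota; last lia.
rewrite (_ : 1 + i.-1 = i); last lia.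
by apply: Ppath_plen_ge => //; lia.
Qed.

Definition cycpos (i : nat) (v : vtx) : nat := if v.1 == i then v.2 else 0.

Lemma nth_cyc ls i t :
  nth base (cyc ls i) t = if 0 < t <= (nth 0 ls i.-1).-1 then (i, t) else base.
Proof.
case: t => [|t] //=; rewrite nth_cat size_map size_iota.
case: ltnP => lt_t.
  by rewrite (nth_map 0) ?size_iota // nth_iota // add1n lt_t.
by case: (_ - _) => [|[]].
Qed.

Lemma cycpos_edge_le n i u w : Defs.inE n u w -> cycpos i w <= (cycpos i u).+1.
Proof.
case=> [[-> ->]|[i' [j [_ _ -> ->]]]]; first by rewrite /cycpos /=; case: eqP.
rewrite !nth_cyc; case: (0 < j <= _) / idP; case: (0 < j.+1 <= _) / idP;
  rewrite /cycpos /=; repeat case: eqP => /=; lia.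
Qed.

Lemma cycpos_edge n i u w : 0 < cycpos i u -> Defs.inE n u w ->
  cycpos i w = (cycpos i u).+1 \/
  (cycpos i w = 0 /\ nth 0 (lens n) i.-1 <= (cycpos i u).+1).
Proof.
move=> pos_gt0 [[eu _]|[i' [j [_ _ eu ew]]]].
  by move: pos_gt0; rewrite eu /cycpos /=; case: eqP.
move: pos_gt0; rewrite eu ew !nth_cyc; set M := (nth 0 _ _).-1.
case: (0 < j <= M); last by rewrite /cycpos /=; case: eqP.
rewrite /cycpos /=; case: eqP => //= <- _.
case Mj: (j < M); [by left; rewrite eqxx | right].
by case: eqP => /= [|_]; rewrite /M in Mj; lia.
Qed.

Lemma counter_return_ge N k (f : nat -> nat) :
    (forall m, m < k -> f m.+1 <= (f m).+1) ->
    (forall m, m < k -> 0 < f m -> f m.+1 = (f m).+1 \/ (f m.+1 = 0 /\ N <= (f m).+1)) ->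
  0 < k -> 0 < f 0 -> f k = f 0 -> N <= k.
Proof.
move=> f_le f_step k_gt0 f0_gt0 fk.
have inv m : m <= k -> f m = f 0 + m \/ f m + N <= m + f 0.
  elim: m => [_|m IH lt_mk]; first by left; rewrite addn0.
  have := f_le m lt_mk; case: (IH (ltnW lt_mk)) => fm; last by right; lia.
  by case: (f_step m lt_mk); lia.
by have := inv k (leqnn k); rewrite fk; lia.
Qed.

Lemma inX_above_neq_base x n m : inX x -> x n != base -> x (n + m) != base.
Proof.
move=> Xx xn; elim: m => [|m IH]; first by rewrite addn0.
rewrite addnS; apply: contra IH => /eqP xS.
by have [_ <-] := Xx (n + m); rewrite xS /phi eqxx.
Qed.

Lemma period_ge_cycle_length x k (s : nat -> nat -> vtx) n :
    0 < k -> s 0 = x -> s k = x -> (forall m, m < k -> Trel (s m) (s m.+1)) ->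
    inV n (x n) -> x n != base ->
  nth 0 (lens n) (x n).1.-1 <= k.
Proof.
move=> k_gt0 s0 sk sT; rewrite /inV => /orP[->//|/andP[_ /andP[j_gt0 _]]] _.
apply: (@counter_return_ge _ _ (fun m => cycpos (x n).1 (s m n))) => //.
- by move=> m /sT /(_ n); apply: cycpos_edge_le.
- by move=> m /sT /(_ n) edge pos_gt0; apply: cycpos_edge.
- by rewrite s0 /cycpos eqxx.
- by rewrite s0 sk.
Qed.

Theorem lemma3p2 :
  inX pt /\ Trel pt pt /\ (forall x, periodic x -> x = pt).
Proof.
split; first by move=> n; rewrite /pt /inV eqxx /phi eqxx.
split; first by move=> n; left.
move=> x [Xx [k [k_gt0 [s [s0 sk sT]]]]].
apply: functional_extensionality => n0; apply/eqP/negPn/negP => x_n0.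
pose n := n0 + k.+1.
have x_n : x n != base := @inX_above_neq_base x n0 k.+1 Xx x_n0.
have [Vn _] := Xx n.
have period_ge := @period_ge_cycle_length x k s n k_gt0 s0 sk (fun m lt_mk => (sT m lt_mk).2) Vn x_n.
move: Vn; rewrite /inV (negbTE x_n) => /andP[/andP[i_gt0 le_in] _].
have lens_n : n <= nth 0 (lens n) (x n).1.-1 by apply: lens_ge; rewrite i_gt0 le_in.
have : k < n by rewrite /n; lia.
lia.
Qed.
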